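(* Consider a market and, for every hospital $h$, a choice function $\mathrm{Ch}_h$ that satisfies substitutability (SUB), irrelevance of rejected contracts (IRC) and compatibility (COM). Then the generalized deferred acceptance mechanism run with these choice functions produces a matching $X'$ that is $B'_H$-stable, where $B'_h=\max\{B_h,w_h(X')\}$ for each $h\in H$.
   Context: A market consists of a finite set of doctors $D$, a finite set of hospitals $H$, a finite set of contracts $X\subseteq D\times H\times\mathbb{R}_{>0}$ (contract $x=(d,h,w)$ has doctor $x_D=d$, hospital $x_H=h$, wage $x_W=w$), strict preferences $\succ_d$ of each doctor $d$ over $X_d\cup\{\emptyset\}$, additive utilities $f_h$ of each hospital ($f_h(x)>0$ for $x\in X_h$, $f_h(Y)=\sum_{x\in Y}f_h(x)$), and budgets $B_h>0$ with $0<x_W\le B_h$ for all $x\in X_h$. For $Y\subseteq X$: $Y_d=\{x\in Y:x_D=d\}$, $Y_h=\{x\in Y:x_H=h\}$, $w_h(Y)=\sum_{x\in Y_h}x_W$. A matching is $Y\subseteq X$ with $|Y_d|\le1$ for all $d$. Given $B'_H=(B'_h)_h$, a matching $Y$ is $B'_H$-feasible if $w_h(Y)\le B'_h$ for all $h$; a matching $Z\subseteq X_h$ blocks $Y$ if every doctor $x_D$ with $x\in Z\setminus Y$ strictly prefers $x$ to her contract in $Y$ (or to $\emptyset$), $f_h(Z)>f_h(Y_h)$ and $w_h(Z)\le B'_h$; $Y$ is $B'_H$-stable if it is $B'_H$-feasible and not blocked by any $h$ and $Z\subseteq X_h$. A choice function of hospital $h$ is a map $\mathrm{Ch}_h:2^{X_h}\to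 2^{X_h}$ with $\mathrm{Ch}_h(Y)\subseteq Y$; set $\mathrm{Ch}_H(Y)=\bigcup_{h}\mathrm{Ch}_h(Y_h)$. For a doctor $d$, $\mathrm{Ch}_d(Y)=\{x\}$ where $x$ is the $\succ_d$-best contract in $Y_d$ if $x\succ_d\emptyset$, and $\emptyset$ otherwise; $\mathrm{Ch}_D(Y)=\bigcup_d\mathrm{Ch}_d(Y_d)$. Generalized deferred acceptance: $R^{(0)}=\emptyset$; for $i=1,2,\dots$: $Y^{(i)}=\mathrm{Ch}_D(X\setminus R^{(i-1)})$, $Z^{(i)}=\mathrm{Ch}_H(Y^{(i)})$, $R^{(i)}=R^{(i-1)}\cup(Y^{(i)}\setminus Z^{(i)})$; if $Y^{(i)}=Z^{(i)}$, output $Y^{(i)}$. Properties of $\mathrm{Ch}_h$: SUB: for all $Y''\subseteq Y'\subseteq X_h$, $Y''\setminus\mathrm{Ch}_h(Y'')\subseteq Y'\setminus\mathrm{Ch}_h(Y')$. IRC: for $Y'\subseteq X_h$ and $Y''\subseteq X_h\setminus Y'$, if $\mathrm{Ch}_h(Y'\cup Y'')\subseteq Y'$ then $\mathrm{Ch}_h(Y')=\mathrm{Ch}_h(Y'\cup Y'')$. COM: for all $Y''\subseteq Y'\subseteq X_h$ with $w_h(Y'')\le\max\{B_h,w_h(\mathrm{Ch}_h(Y'))\}$, $f_h(\mathrm{Ch}_h(Y'))\ge f_h(Y'')$. *)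

From HB Require Import structures.
From mathcomp Require Import all_boot all_order all_algebra.
Set Implicit Arguments. Unset Strict Implicit. Unset Printing Implicit Defensive.
Import Order.TTheory GRing.Theory Num.Theory.
Local Open Scope ring_scope.

(* Market: doctors D, hospitals H, contracts X = all elements of the finite
   type C; a contract x has doctor cD x, hospital cH x and wage cW x.
   Doctor preferences: pr d a b means "d strictly prefers a to b", where
   a, b : option C and None stands for the empty outcome (being unmatched).
   Hospital utilities: f x = f_h(x) for h = cH x (additive). *)

Section Market.
Variables (R : realFieldType) (D H C : finType).
Variables (cD : C -> D) (cH : C -> H) (cW : C -> R).
Variable pr : D -> option C -> option C -> bool.
Variable f : C -> R.

Definition Xh (h : H) : {set C} := [set x | cH x == h].
Definition restrH (Y : {set C}) (h : H) : {set C} := [set x in Y | cH x == h].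
Definition restrD (Y : {set C}) (d : D) : {set C} := [set x in Y | cD x == d].

Definition wh (h : H) (Y : {set C}) : R := \sum_(x in Y | cH x == h) cW x.
(* f_h(Y) = sum of f_h over Y (used for Y subset of X_h) *)
Definition fsum (Y : {set C}) : R := \sum_(x in Y) f x.

Definition is_matching (Y : {set C}) : Prop := forall d : D, (#|restrD Y d| <= 1)%N.

Definition pdom (d : D) (o : option C) : bool :=
  if o is Some x then cD x == d else true.

Definition strict_total_pref : Prop :=
  forall d : D,
    (forall a, pdom d a -> ~~ pr d a a) /\
    (forall a b c, pdom d a -> pdom d b -> pdom d c ->
        pr d a b -> pr d b c -> pr d a c) /\
    (forall a b, pdom d a -> pdom d b -> a != b -> pr d a b || pr d b a).

Definition Ch_d (Y : {set C}) (d : D) : {set C} :=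
  match [pick x in restrD Y d |
           pr d (Some x) None &&
           [forall y in restrD Y d, (y != x) ==> pr d (Some x) (Some y)]] with
  | Some x => [set x]
  | None => set0
  end.

Definition Ch_D (Y : {set C}) : {set C} := \bigcup_(d : D) Ch_d (restrD Y d) d.

Variable Ch : H -> {set C} -> {set C}.

Definition Ch_H (Y : {set C}) : {set C} := \bigcup_(h : H) Ch h (restrH Y h).

(* Generalized deferred acceptance.  Index k here corresponds to round
   i = k+1 of the paper: rej k = R^{(k)}, Yr k = Y^{(k+1)}, Zr k = Z^{(k+1)}. *)
Fixpoint rej (k : nat) : {set C} :=
  match k with
  | 0 => set0
  | k'.+1 => let Y := Ch_D (~: rej k') in rej k' :|: (Y :\: Ch_H Y)
  end.
Definition Yr (k : nat) : {set C} := Ch_D (~: rej k).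
Definition Zr (k : nat) : {set C} := Ch_H (Yr k).

Definition is_choice_function : Prop :=
  forall (h : H) (Y : {set C}), Y \subset Xh h -> Ch h Y \subset Y.

Definition SUB (h : H) : Prop :=
  forall Y'' Y' : {set C}, Y'' \subset Y' -> Y' \subset Xh h ->
    (Y'' :\: Ch h Y'') \subset (Y' :\: Ch h Y').

Definition IRC (h : H) : Prop :=
  forall Y' Y'' : {set C}, Y' \subset Xh h -> Y'' \subset (Xh h :\: Y') ->
    Ch h (Y' :|: Y'') \subset Y' -> Ch h Y' = Ch h (Y' :|: Y'').

Definition COM (B : H -> R) (h : H) : Prop :=
  forall Y'' Y' : {set C}, Y'' \subset Y' -> Y' \subset Xh h ->
    wh h Y'' <= Num.max (B h) (wh h (Ch h Y')) ->
    fsum Y'' <= fsum (Ch h Y').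

Definition contract_of (Y : {set C}) (d : D) : option C :=
  [pick y in restrD Y d].

Definition feasible (B' : H -> R) (Y : {set C}) : Prop :=
  is_matching Y /\ forall h : H, wh h Y <= B' h.

Definition blocks (B' : H -> R) (Y : {set C}) (h : H) (Z : {set C}) : Prop :=
  [/\ Z \subset Xh h, is_matching Z,
      (forall x, x \in Z :\: Y -> pr (cD x) (Some x) (contract_of Y (cD x))),
      fsum (restrH Y h) < fsum Z
    & wh h Z <= B' h].

Definition stable (B' : H -> R) (Y : {set C}) : Prop :=
  feasible B' Y /\ ~ (exists (h : H) (Z : {set C}), blocks B' Y h Z).

End Market.

From HB Require Import structures.
From mathcomp Require Import all_boot all_order all_algebra.
Import Order.TTheory GRing.Theory Num.Theory.
Set Implicit Arguments. Unset Strict Implicit. Unset Printing Implicit Defensive.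

(* Idea: doctors walk down their preference lists, so every contract a doctor
   prefers to her final one has been proposed and rejected.  By SUB a rejected
   contract stays rejected from any larger set, so by IRC the hospital's choice
   from everything ever proposed to it is its final assignment X'_h.  A blocking
   set Z only uses proposed contracts and fits in the budget
   max {B_h, w_h(X')}, so COM gives f_h(Z) <= f_h(X'_h): no blocking. *)

Section DoctorChoice.
Variables (D C : finType) (cD : C -> D).
Variable pr : D -> option C -> option C -> bool.
Hypothesis pr_strict : strict_total_pref cD pr.

Lemma pr_irr x : ~~ pr (cD x) (Some x) (Some x).
Proof. by have [irr _] := pr_strict (cD x); apply: irr => /=. Qed.

Lemma pr_trans x y z : cD y = cD x -> cD z = cD x ->
  pr (cD x) (Some x) (Some y) -> pr (cD x) (Some y) (Some z) ->
  pr (cD x) (Some x) (Some z).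
Proof.
move=> ey ez; have [_ [ptrans _]] := pr_strict (cD x).
by apply: ptrans => //=; apply/eqP.
Qed.

Lemma pr_trans_None x y : cD y = cD x ->
  pr (cD x) (Some x) (Some y) -> pr (cD x) (Some y) None -> pr (cD x) (Some x) None.
Proof.
move=> ey; have [_ [ptrans _]] := pr_strict (cD x).
by apply: ptrans => //=; apply/eqP.
Qed.

Lemma pr_total x y : cD y = cD x -> x != y ->
  pr (cD x) (Some x) (Some y) || pr (cD x) (Some y) (Some x).
Proof.
move=> ey nxy; have [_ [_ tot]] := pr_strict (cD x).
by apply: tot => //=; apply/eqP.
Qed.

Lemma pr_asym x y : cD y = cD x ->
  pr (cD x) (Some x) (Some y) -> ~~ pr (cD x) (Some y) (Some x).
Proof.
move=> ey xy; apply/negP => yx.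
by have := pr_irr x; rewrite (pr_trans ey (erefl _) xy yx).
Qed.

Definition best (S : {set C}) (x : C) : bool :=
  [&& x \in S, pr (cD x) (Some x) None &
      [forall y in S, (cD y == cD x) ==> (y != x) ==> pr (cD x) (Some x) (Some y)]].

Lemma best_uniq (S : {set C}) x y : best S x -> best S y -> cD x = cD y -> x = y.
Proof.
case/and3P=> xS _ /forall_inP bx; case/and3P=> yS _ /forall_inP b_y exy.
apply/eqP; apply/negPn/negP => nxy.
have xy := bx y yS; rewrite -exy eqxx eq_sym nxy /= in xy.
have yx := b_y x xS; rewrite exy eqxx nxy /= in yx.
by have := pr_asym exy yx; rewrite -exy xy.
Qed.

Lemma best_sub (S S' : {set C}) x : S' \subset S -> x \in S' -> best S x -> best S' x.
Proof.
move=> sS xS' /and3P[_ acc /forall_inP bx]; rewrite /best xS' acc /=.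
by apply/forall_inP => y yS'; apply: bx; apply: (subsetP sS).
Qed.

Lemma best_exists (S : {set C}) x : x \in S -> pr (cD x) (Some x) None ->
  exists2 m, best S m & cD m = cD x.
Proof.
move=> xS acc; set d := cD x.
pose P := [pred y | (y \in S) && (cD y == d) && pr d (Some y) None].
pose dominated y := [set z in S | (cD z == d) && pr d (Some y) (Some z)].
have Px : P x by rewrite /P /= xS eqxx acc.
(* a contract preferred to the maximiser would dominate strictly more *)
have [m /andP[/andP[mS /eqP em] accm] m_max] := arg_maxnP (fun y => #|dominated y|) Px.
exists m => //; rewrite /best mS em accm /=.
apply/forall_inP => y yS; apply/implyP => /eqP ey; apply/implyP => nym.
rewrite eq_sym in nym.
have := pr_total (etrans ey (esym em)) nym; rewrite em => /orP[//|ym].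
have accy : pr d (Some y) None.
  by have := pr_trans_None (y := m) (etrans em (esym ey)); rewrite ey; apply.
have Py : P y by rewrite /P /= yS ey eqxx accy.
suff : (#|dominated m| < #|dominated y|)%N.
  by move=> /leq_trans/(_ (m_max y Py)); rewrite ltnn.
apply: proper_card; apply/properP; split.
  apply/subsetP => z; rewrite !inE => /andP[zS /andP[ez mz]]; rewrite zS ez /=.
  by have := pr_trans (x := y) (y := m) (z := z); rewrite ey; apply => //; apply/eqP.
by exists m; rewrite !inE mS em eqxx //= -em pr_irr.
Qed.

Lemma in_Ch_D (S : {set C}) x : (x \in Ch_D cD pr S) = best S x.
Proof.
have restrD_best d z : (z \in restrD cD (restrD cD S d) d) &&
    (pr d (Some z) None &&
     [forall y in restrD cD (restrD cD S d) d, (y != z) ==> pr d (Some z) (Some y)]) =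
    best S z && (cD z == d).
  have -> : restrD cD (restrD cD S d) d = restrD cD S d.
    by apply/setP => y; rewrite !inE -andbA andbb.
  rewrite /best inE.
  have [<- | _] := eqVneq (cD z) d; last by rewrite !andbF.
  rewrite !andbT; congr (_ && (_ && _)); apply/forall_inP/forall_inP => bz y.
    by move=> yS; apply/implyP => ey; apply: bz; rewrite !inE yS.
  by rewrite !inE => /andP[yS ey]; move: (bz y yS); rewrite ey.
apply/bigcupP/idP => [[d _]|bx]; rewrite /Ch_d.
  case: pickP => [z|_]; last by rewrite inE.
  by rewrite restrD_best inE => /andP[bz _] /eqP ->.
exists (cD x) => //; case: pickP => [z|none].
  by rewrite restrD_best inE => /andP[bz /eqP ez]; rewrite (best_uniq bx bz).
by have := none x; rewrite restrD_best bx eqxx.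
Qed.

Lemma Ch_D_matching (S : {set C}) : is_matching cD (Ch_D cD pr S).
Proof.
move=> d; have [->|[x xd]] := set_0Vmem (restrD cD (Ch_D cD pr S) d).
  by rewrite cards0.
rewrite -(cards1 x) subset_leq_card //; apply/subsetP => y yd; rewrite inE.
move: xd yd; rewrite !inE !in_Ch_D => /andP[bx /eqP ex] /andP[b_y /eqP ey].
by rewrite (best_uniq b_y bx) // ex ey.
Qed.

Lemma Ch_D_undominated (S : {set C}) x : x \in S ->
  pr (cD x) (Some x) (contract_of cD (Ch_D cD pr S) (cD x)) -> x \in Ch_D cD pr S.
Proof.
move=> xS; rewrite /contract_of; case: pickP => [y | none].
  rewrite !inE in_Ch_D => /andP[/and3P[_ _ /forall_inP b_y] /eqP ey] xy.
  have [exy|nyx] := eqVneq y x; first by rewrite exy (negPf (pr_irr x)) in xy.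
  have := b_y x xS; rewrite ey eqxx eq_sym nyx /= -ey => yx.
  by have := pr_asym (esym ey) yx; rewrite ey xy.
move=> acc; have [m bm em] := best_exists xS acc.
by have := none m; rewrite !inE in_Ch_D bm em eqxx.
Qed.

End DoctorChoice.

Section DeferredAcceptance.
Variables (D H C : finType) (cD : C -> D) (cH : C -> H).
Variable pr : D -> option C -> option C -> bool.
Variable Ch : H -> {set C} -> {set C}.
Hypothesis pr_strict : strict_total_pref cD pr.
Hypothesis Ch_choice : is_choice_function cH Ch.

Local Notation rej := (rej cD cH pr Ch).
Local Notation Yr := (Yr cD cH pr Ch).
Local Notation Zr := (Zr cD cH pr Ch).

Definition proposed (k : nat) : {set C} := Yr k :|: rej k.

Lemma rejS k : rej k.+1 = rej k :|: (Yr k :\: Zr k).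
Proof. by []. Qed.

Lemma rej_mono j k : (j <= k)%N -> rej j \subset rej k.
Proof.
elim: k => [|k IH]; first by rewrite leqn0 => /eqP ->.
rewrite leq_eqVlt => /orP[/eqP -> //|]; rewrite ltnS => /IH sjk.
by rewrite rejS (subset_trans sjk) ?subsetUl.
Qed.

Lemma rejP k y : y \in rej k -> exists2 j, (j < k)%N & y \in Yr j :\: Zr j.
Proof.
elim: k => [|k IH]; first by rewrite inE.
rewrite rejS inE => /orP[/IH [j jk yj]|yk]; last by exists k.
by exists j => //; apply: ltnW.
Qed.

Lemma Yr_sub_proposed j k : (j <= k)%N -> Yr j \subset proposed k.
Proof.
move=> jk; apply/subsetP => y yj; rewrite inE; apply/orP.
have [|nyk] := boolP (y \in rej k); [by right | left].
move: yj; rewrite /Yr !in_Ch_D //; apply: best_sub; last by rewrite inE.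
by rewrite setCS rej_mono.
Qed.

Lemma restrH_sub (Y : {set C}) h : restrH cH Y h \subset Xh cH h.
Proof. by apply/subsetP => x; rewrite !inE => /andP[]. Qed.

Lemma restrH_Ch_H (Y : {set C}) h : restrH cH (Ch_H cH Ch Y) h = Ch h (restrH cH Y h).
Proof.
have Ch_in h' x : x \in Ch h' (restrH cH Y h') -> (x \in Y) && (cH x == h').
  by move/(subsetP (Ch_choice (restrH_sub Y h'))); rewrite inE.
apply/setP => x; rewrite inE; apply/andP/idP => [[/bigcupP[h' _ xh'] /eqP <-]|xh].
  by case/andP: (Ch_in _ _ xh') => _ /eqP ->.
by case/andP: (Ch_in _ _ xh) => _ ->; split=> //; apply/bigcupP; exists h.
Qed.

Lemma Zr_sub_Yr k : Zr k \subset Yr k.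
Proof.
apply/subsetP => x /bigcupP[h _ /(subsetP (Ch_choice (restrH_sub _ h)))].
by rewrite inE => /andP[].
Qed.

Lemma Yr_disjoint_rej k : [disjoint Yr k & rej k].
Proof.
apply/pred0P => x /=; apply/negP => /andP[].
by rewrite /Yr in_Ch_D // => /and3P[]; rewrite inE => /negP nxr _ _ /nxr.
Qed.

Lemma Yr_eq_Zr_of_rej_stable k : rej k.+1 = rej k -> Yr k = Zr k.
Proof.
move=> stable_k; apply/eqP; rewrite eqEsubset Zr_sub_Yr andbT.
apply/subsetP => x xY; apply/negPn/negP => nxZ.
have : x \in rej k.+1 by rewrite rejS !inE xY nxZ orbT.
by rewrite stable_k => xr; have /pred0P/(_ x)/= := Yr_disjoint_rej k; rewrite xY xr.
Qed.

Lemma termination : exists k, Yr k = Zr k.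
Proof.
suff [[k /Yr_eq_Zr_of_rej_stable]|] :
    (exists k, rej k.+1 = rej k) \/ (#|C|.+1 <= #|rej #|C|.+1|)%N.
- by exists k.
- by rewrite ltnNge max_card.
elim: #|C|.+1 => [|n [?|IH]]; [by right | by left |].
have [e|ne] := eqVneq (rej n.+1) (rej n); first by left; exists n.
right; apply: leq_ltn_trans IH (proper_card _).
by rewrite properEneq eq_sym ne rejS subsetUl.
Qed.

Section Outcome.
Variable h : H.
Hypothesis Ch_SUB : SUB cH Ch h.
Hypothesis Ch_IRC : IRC cH Ch h.
Variable k : nat.

Lemma Ch_excludes_rej (A : {set C}) y :
  A \subset Xh cH h -> restrH cH (proposed k) h \subset A ->
  y \in rej k -> y \notin Ch h A.
Proof.
move=> AX propA /rejP[j jk]; rewrite inE => /andP[nyZ yY].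
apply/negP => yA.
have sYjA : restrH cH (Yr j) h \subset A.
  apply: subset_trans propA; apply/subsetP => z; rewrite !inE => /andP[zY ->].
  by rewrite andbT -in_setU (subsetP (Yr_sub_proposed (ltnW jk))).
have ehy : cH y == h by have := subsetP AX y (subsetP (Ch_choice AX) y yA); rewrite inE.
have : y \in restrH cH (Yr j) h :\: Ch h (restrH cH (Yr j) h).
  by rewrite -restrH_Ch_H !inE yY ehy !andbT; exact: nyZ.
by move/(subsetP (Ch_SUB sYjA AX)); rewrite inE yA.
Qed.

Hypothesis stop_k : Yr k = Zr k.

Lemma Ch_proposed : Ch h (restrH cH (proposed k) h) = restrH cH (Yr k) h.
Proof.
set A := restrH cH (proposed k) h; set X' := restrH cH (Yr k) h.
have AX : A \subset Xh cH h by apply: restrH_sub.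
have X'A : X' \subset A by apply/subsetP => z; rewrite !inE => /andP[-> ->].
have ChX' : Ch h X' = X' by rewrite /X' {2}stop_k /Zr restrH_Ch_H.
have ChA : Ch h A \subset X'.
  apply/subsetP => y yC; have := subsetP (Ch_choice AX) y yC.
  rewrite !inE => /andP[/orP[yY|yr] ->]; first by rewrite yY.
  by have := Ch_excludes_rej AX (subxx _) yr; rewrite yC.
have splitA : X' :|: (A :\: X') = A by rewrite -{1}(setIidPr X'A) setID.
by rewrite -[RHS]ChX' (Ch_IRC (restrH_sub (Yr k) h) (setSD X' AX)) ?splitA.
Qed.

End Outcome.

Lemma blocking_sub_proposed k h (Z : {set C}) : Z \subset Xh cH h ->
  (forall x, x \in Z :\: Yr k -> pr (cD x) (Some x) (contract_of cD (Yr k) (cD x))) ->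
  Z \subset restrH cH (proposed k) h.
Proof.
move=> ZX Zpref; apply/subsetP => x xZ.
have := subsetP ZX x xZ; rewrite !inE => ->; rewrite andbT.
have [//|xY /=] := boolP (x \in Yr k); apply/negPn/negP => nxr.
have xS : x \in ~: rej k by rewrite inE.
have xZY : x \in Z :\: Yr k by rewrite inE xZ xY.
by have := Ch_D_undominated pr_strict xS (Zpref x xZY); rewrite (negPf xY).
Qed.

End DeferredAcceptance.

Local Open Scope ring_scope.

Lemma wh_restrH (R : realFieldType) (H C : finType) (cH : C -> H) (cW : C -> R) h Y :
  wh cH cW h (restrH cH Y h) = wh cH cW h Y.
Proof. by apply: eq_bigl => x; rewrite inE -andbA andbb. Qed.

Theorem theorem2 (R : realFieldType) (D H C : finType)
    (cD : C -> D) (cH : C -> H) (cW : C -> R)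
    (pr : D -> option C -> option C -> bool) (f : C -> R) (B : H -> R)
    (Ch : H -> {set C} -> {set C}) :
  injective (fun x : C => (cD x, cH x, cW x)) ->
  strict_total_pref cD pr ->
  (forall x : C, 0 < f x) ->
  (forall h : H, 0 < B h) ->
  (forall x : C, 0 < cW x /\ cW x <= B (cH x)) ->
  is_choice_function cH Ch ->
  (forall h : H, SUB cH Ch h) ->
  (forall h : H, IRC cH Ch h) ->
  (forall h : H, COM cH cW f Ch B h) ->
  (* the algorithm terminates ... *)
  (exists k : nat, Yr cD cH pr Ch k = Zr cD cH pr Ch k) /\
  (* ... and its output X' (the Y at the first round with Y = Z) is
     B'_H-stable with B'_h = max (B_h, w_h(X')) *)
  (forall k : nat,
     Yr cD cH pr Ch k = Zr cD cH pr Ch k ->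
     (forall j : nat, (j < k)%N -> Yr cD cH pr Ch j <> Zr cD cH pr Ch j) ->
     let X' := Yr cD cH pr Ch k in
     stable cD cH cW pr f (fun h => Num.max (B h) (wh cH cW h X')) X').
Proof.
move=> _ pr_strict _ _ _ Ch_choice Ch_SUB Ch_IRC Ch_COM.
split; first exact: termination.
move=> k stop_k _ X'; split.
  by split=> [|h]; [exact: Ch_D_matching | rewrite le_max lexx orbT].
case=> h [Z [ZX _ Zpref Zgain Zbudget]].
have ZA := blocking_sub_proposed pr_strict ZX Zpref.
have := Ch_COM h Z _ ZA (restrH_sub _ _ _).
rewrite (Ch_proposed pr_strict Ch_choice (Ch_SUB h) (Ch_IRC h) stop_k) wh_restrH.
by move=> /(_ Zbudget); rewrite leNgt Zgain.
Qed.
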